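(* Let $K$ be a field, $X$ a finite connected poset, $\varphi$ an elementary Lie automorphism of $I(X,K)$, $\theta=\theta_\varphi$, and $x<y$ with $\theta(e_{xy})=e_{uv}$. Then for all $z\in X$, $$\varphi(e_z)(v,v)-\varphi(e_z)(u,u)=\begin{cases}-1,& z=x,\\ 1,& z=y,\\ 0,& z\notin\{x,y\}.\end{cases}$$
   Context: $I(X,K)$ is the incidence algebra: functions $f:X\times X\to K$ with $f(x,y)=0$ unless $x\le y$, product $(fg)(x,y)=\sum_{x\le t\le y}f(x,t)g(t,y)$; $e_{xy}$ ($x\le y$) is the basis element equal to $1$ at $(x,y)$ and $0$ elsewhere, $e_z=e_{zz}$. $B=\{e_{xy}:x<y\}$. A Lie automorphism is a bijective linear map preserving $[f,g]=fg-gf$. With $l(\lfloor x,y\rfloor)$ the maximal length of a chain in $\{z:x\le z\le y\}$ and $L_i=\mathrm{span}_K\{e_{xy}:l(\lfloor x,y\rfloor)=i\}$, for a Lie automorphism $\psi$ let $\widetilde\psi$ send $e_{xy}\in L_i$ to the $L_i$-component of $\psi(e_{xy})$. A Lie automorphism $\varphi$ is elementary if $\varphi=\widetilde\psi$ for some Lie automorphism $\psi$ (equivalently $\varphi(L_i)\subseteq L_i$ for all $i$). For elementary $\varphi$, for each $x<y$ there are a unique $e_{uv}\in B$ and $k\in K^*$ with $\varphi(e_{xy})=k e_{uv}$; set $\theta_\varphi(e_{xy})=e_{uv}$. Connected means any two elements are joined by a sequence in which consecutive elements are in a covering relation. *)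

From HB Require Import structures.
From mathcomp Require Import all_boot all_order all_algebra.
Set Implicit Arguments. Unset Strict Implicit. Unset Printing Implicit Defensive.
Import Order.TTheory GRing.Theory.
Local Open Scope ring_scope.

Definition incpred (d : Order.disp_t) (X : finPOrderType d) (K : fieldType)
  : {pred {ffun X * X -> K^o}} :=
  [pred f : {ffun X * X -> K^o} | [forall p : X * X, ~~ (p.1 <= p.2)%O ==> (f p == 0)]].

Lemma incpred_closed d (X : finPOrderType d) (K : fieldType) :
  subsemimod_closed (@incpred d X K).
Proof.
split; [split|].
- by rewrite /incpred inE; apply/forallP => p; rewrite ffunE eqxx implybT.
- move=> u v; rewrite /incpred !inE => /forallP Hu /forallP Hv.
  apply/forallP => p; apply/implyP => Hp.
  have := implyP (Hu p) Hp; have := implyP (Hv p) Hp.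
  by rewrite !ffunE => /eqP -> /eqP ->; rewrite addr0.
- move=> a u; rewrite /incpred !inE => /forallP Hu.
  apply/forallP => p; apply/implyP => Hp.
  have := implyP (Hu p) Hp.
  by rewrite !ffunE => /eqP ->; rewrite scaler0.
Qed.

HB.instance Definition _ d (X : finPOrderType d) (K : fieldType) :=
  GRing.isSubmodClosed.Build K {ffun X * X -> K^o} (@incpred d X K)
    (@incpred_closed d X K).

Record incalg d (X : finPOrderType d) (K : fieldType) :=
  IncAlg { incval :> {ffun X * X -> K^o}; _ : incval \in @incpred d X K }.

HB.instance Definition _ d X K := [isSub for @incval d X K].
HB.instance Definition _ d X K := [Choice of @incalg d X K by <:].
HB.instance Definition _ d X K :=
  [SubChoice_isSubLmodule of @incalg d X K by <:].

Section Incidence.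
Variables (d : Order.disp_t) (X : finPOrderType d) (K : fieldType).
Local Notation I := (@incalg d X K).

Lemma incmul_subproof (f g : I) :
  [ffun p : X * X => if (p.1 <= p.2)%O then
      \sum_(t : X | (p.1 <= t)%O && (t <= p.2)%O) f (p.1, t) * g (t, p.2)
    else 0 : K^o] \in @incpred d X K.
Proof.
rewrite /incpred inE; apply/forallP => p; rewrite ffunE.
by apply/implyP => /negbTE ->.
Qed.

Definition incmul (f g : I) : I := IncAlg (incmul_subproof f g).

Definition lie (f g : I) : I := incmul f g - incmul g f.

(* The basis element e_{xy}: 1 at (x,y), 0 elsewhere (only used for x <= y;
   by convention it is 0 when x <= y fails, so that it is total). *)
Lemma e_subproof (x y : X) :
  [ffun p : X * X => if (p == (x, y)) && (x <= y)%O then 1 else 0 : K^o]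
    \in @incpred d X K.
Proof.
rewrite /incpred inE; apply/forallP => p; rewrite ffunE.
apply/implyP => H; have [E|] := eqVneq p (x, y); last by [].
by move: H; rewrite E /= => /negbTE ->; rewrite ?andbF.
Qed.

Definition e (x y : X) : I := IncAlg (e_subproof x y).
Definition ez (z : X) : I := e z z.

Definition lie_aut (phi : {linear I -> I}) : Prop :=
  bijective phi /\ forall f g : I, phi (lie f g) = lie (phi f) (phi g).

Definition is_chain_in (x y : X) (A : {set X}) : bool :=
  [forall a in A, (x <= a)%O && (a <= y)%O] &&
  [forall a in A, forall b in A, (a <= b)%O || (b <= a)%O].

Definition lint (x y : X) : nat :=
  \max_(A : {set X} | is_chain_in x y A) (#|A|.-1)%N.

(* The L_i-component of an element g of I(X,K), where
   L_i = span {e_xy : x <= y, l(|x,y|) = i}. *)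
Lemma comp_subproof (i : nat) (g : I) :
  [ffun q : X * X => if (q.1 <= q.2)%O && (lint q.1 q.2 == i) then g q else 0 : K^o]
    \in @incpred d X K.
Proof.
rewrite /incpred inE; apply/forallP => p; rewrite ffunE.
by apply/implyP => /negbTE ->.
Qed.

Definition comp (i : nat) (g : I) : I := IncAlg (comp_subproof i g).

Definition tilde (psi : {linear I -> I}) (f : I) : I :=
  \sum_(p : X * X | (p.1 <= p.2)%O)
     (f p : K) *: comp (lint p.1 p.2) (psi (e p.1 p.2)).

Definition elementary (phi : {linear I -> I}) : Prop :=
  lie_aut phi /\ exists psi : {linear I -> I}, lie_aut psi /\ forall f, phi f = tilde psi f.

End Incidence.

Definition covers d (X : finPOrderType d) (a b : X) : bool :=
  (a < b)%O && [forall c : X, ~~ ((a < c)%O && (c < b)%O)].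

Definition poset_connected d (X : finPOrderType d) : Prop :=
  forall a b : X, exists s : seq X,
    path (fun p q : X => covers p q || covers q p) a s && (last a s == b).

(* Since [e_z, e_xy] = (d_zx - d_zy) e_xy, applying phi gives
   (d_zx - d_zy) k e_uv = [phi(e_z), k e_uv], and the (u,v) entry of
   [g, e_uv] is g(u,u) - g(v,v). *)
From HB Require Import structures.
From mathcomp Require Import all_boot all_order all_algebra.
Import Order.TTheory GRing.Theory.
Local Open Scope ring_scope.

Section IncidenceUnits.
Variables (d : Order.disp_t) (X : finPOrderType d) (K : fieldType).
Local Notation I := (@incalg d X K).

Lemma incvalZ (c : K) (f : I) p : incval (c *: f) p = c * incval f p.
Proof. by rewrite /= ffunE. Qed.

Lemma incvalB (f g : I) p : incval (f - g) p = incval f p - incval g p.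
Proof. by rewrite /= !ffunE. Qed.

Lemma incval_e (a b : X) p :
  incval (e K a b) p = ((p == (a, b)) && (a <= b)%O)%:R.
Proof. by rewrite /= ffunE; case: ifP. Qed.

Lemma incval_mul (f g : I) p :
  incval (incmul f g) p = if (p.1 <= p.2)%O then
    \sum_(t | (p.1 <= t)%O && (t <= p.2)%O) f (p.1, t) * g (t, p.2) else 0.
Proof. by rewrite /= ffunE. Qed.

Lemma incmulZr (c : K) (f g : I) : incmul f (c *: g) = c *: incmul f g.
Proof.
apply: val_inj; apply/ffunP => p; rewrite incvalZ !incval_mul.
case: ifP => _; last by rewrite mulr0.
by rewrite mulr_sumr; apply: eq_bigr => t _; rewrite incvalZ mulrCA.
Qed.

Lemma incmulZl (c : K) (f g : I) : incmul (c *: f) g = c *: incmul f g.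
Proof.
apply: val_inj; apply/ffunP => p; rewrite incvalZ !incval_mul.
case: ifP => _; last by rewrite mulr0.
by rewrite mulr_sumr; apply: eq_bigr => t _; rewrite incvalZ mulrA.
Qed.

Lemma lieZr (c : K) (f g : I) : lie f (c *: g) = c *: lie f g.
Proof. by rewrite /lie incmulZr incmulZl scalerBr. Qed.

Lemma incmul_e_r (g : I) (a b : X) p :
  incval (incmul g (e K a b)) p =
  if (p.2 == b) && (p.1 <= a)%O && (a <= b)%O then g (p.1, a) else 0.
Proof.
case: p => p1 p2; rewrite incval_mul.
have term (t : X) : g (p1, t) * e K a b (t, p2) =
    if (t == a) && (p2 == b) && (a <= b)%O then g (p1, a) else 0.
  rewrite incval_e xpair_eqE.
  have [->|_] /= := eqVneq t a; last by rewrite mulr0.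
  by case: ifP; rewrite ?mulr1 ?mulr0.
under eq_bigr do rewrite term; rewrite /=.
case: (boolP ((p2 == b) && (p1 <= a)%O && (a <= b)%O)).
  move=> /andP [/andP [/eqP -> p1a] ab].
  rewrite (le_trans p1a ab) eqxx ab (bigD1 a) /= ?p1a ?ab // eqxx.
  by rewrite big1 ?addr0 // => t /andP [_ /negbTE ->].
move=> cond_false; case: ifP => // _; rewrite big1 // => t /andP [p1t _].
have [ta|] //= := eqVneq t a.
by move: cond_false; rewrite -ta p1t andbT => /negbTE ->.
Qed.

Lemma incmul_e_l (g : I) (a b : X) p :
  incval (incmul (e K a b) g) p =
  if (p.1 == a) && (b <= p.2)%O && (a <= b)%O then g (b, p.2) else 0.
Proof.
case: p => p1 p2; rewrite incval_mul.
have term (t : X) : e K a b (p1, t) * g (t, p2) =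
    if (t == b) && (p1 == a) && (a <= b)%O then g (b, p2) else 0.
  rewrite incval_e xpair_eqE.
  have [->|_] /= := eqVneq t b; last by rewrite andbF mul0r.
  by rewrite andbT; case: ifP; rewrite ?mul1r ?mul0r.
under eq_bigr do rewrite term; rewrite /=.
case: (boolP ((p1 == a) && (b <= p2)%O && (a <= b)%O)).
  move=> /andP [/andP [/eqP -> bp2] ab].
  rewrite (le_trans ab bp2) eqxx ab (bigD1 b) /= ?bp2 ?ab // eqxx.
  by rewrite big1 ?addr0 // => t /andP [_ /negbTE ->].
move=> cond_false; case: ifP => // _; rewrite big1 // => t /andP [_ tp2].
have [tb|] //= := eqVneq t b.
by move: cond_false; rewrite -tb tp2 andbT => /negbTE ->.
Qed.

Lemma incmul_e_e (a b c c' : X) : (a <= b)%O -> (c <= c')%O ->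
  incmul (e K a b) (e K c c') = (b == c)%:R *: e K a c'.
Proof.
move=> ab cc'; apply: val_inj; apply/ffunP => p.
rewrite incvalZ incmul_e_l !incval_e ab andbT xpair_eqE.
move: cc'; have [<- bc'|_ _] := eqVneq b c; last by rewrite mul0r; case: ifP.
rewrite mul1r; case: p => p1 p2 /=; rewrite xpair_eqE.
have [_ | _] /= := eqVneq p1 a; last by [].
have [-> | _] /= := eqVneq p2 c'; last by case: ifP.
by rewrite bc' (le_trans ab bc').
Qed.

Lemma lie_e_entry (g : I) (u v : X) : (u <= v)%O ->
  incval (lie g (e K u v)) (u, v) = g (u, u) - g (v, v).
Proof. by move=> uv; rewrite incvalB incmul_e_r incmul_e_l /= !eqxx !lexx uv. Qed.

Lemma lie_ez_e (z x y : X) : (x < y)%O ->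
  lie (ez K z) (e K x y) = ((z == x)%:R - (z == y)%:R) *: e K x y.
Proof.
move=> xy; rewrite /lie /ez !incmul_e_e ?lexx ?ltW // scalerBl.
congr (_ - _); first by have [->|_] := eqVneq z x; rewrite ?scale0r.
by rewrite eq_sym; have [->|_] := eqVneq z y; rewrite ?scale0r.
Qed.

End IncidenceUnits.

Theorem lemma5p7 (d : Order.disp_t) (X : finPOrderType d) (K : fieldType)
    (phi : {linear incalg X K -> incalg X K}) (x y u v : X) (k : K) :
  poset_connected X ->
  elementary phi ->
  (x < y)%O ->
  (u < v)%O -> k != 0 -> phi (e K x y) = k *: e K u v ->
  forall z : X,
    (incval (phi (ez K z)) (v, v) - incval (phi (ez K z)) (u, u) : K)
      = (if z == x then -1 else if z == y then 1 else 0).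
Proof.
move=> _ [[_ phi_lie] _] xy uv k0 phi_xy z.
have := phi_lie (ez K z) (e K x y).
rewrite lie_ez_e // linearZ phi_xy lieZr.
move/(congr1 (fun f : incalg X K => incval f (u, v))).
rewrite !incvalZ lie_e_entry ?ltW // incval_e eqxx ltW //= mulr1 mulrC.
move/(mulfI k0) => entry_uv; rewrite -opprB -entry_uv.
have [->|_] := eqVneq z x; first by rewrite (lt_eqF xy) subr0.
by have [_|_] := eqVneq z y; rewrite ?sub0r ?opprK ?subrr ?oppr0.
Qed.
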